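(* Let $V = \{v_1, \dots, v_n\}$ be floating-point values (each zero or a normal IEEE 754 double), let $\alpha_i = DP(v_i)$ and $\alpha_{max} = \max\{\alpha_1, \dots, \alpha_n\}$. For each $i$ let $\hat{\beta}_i = \alpha_{max} + \lfloor \log_{10}|v_i| \rfloor + 1$ if $v_i \neq 0$ and $\hat{\beta}_i = 0$ if $v_i = 0$, and let $\hat{\beta}_{max} = \max\{\hat{\beta}_1, \dots, \hat{\beta}_n\}$. Let $g_i = round(v_i \otimes 10^{\alpha_{max}})$. If $\alpha_{max} \le 22$ and $\hat{\beta}_{max} \le 15$, then $v_i = g_i \div 10^{\alpha_{max}}$ for all $1 \le i \le n$, where the division is performed in IEEE 754 double-precision arithmetic.
   Context: Convention: a floating-point value $v$ is identified with the decimal number given by its decimal format, i.e. its shortest decimal representation that reads back to $v$. For a nonzero terminating decimal $x$, the decimal place $DP(x)$ is the least nonnegative integer $j$ with $x \times 10^j$ an integer; $DP(0)=0$. $v \otimes 10^{i}$ and $a \div 10^i$ denote multiplication and division computed in IEEE 754 double-precision arithmetic (round-to-nearest), with $10^i$ represented as a double. $round(\cdot)$ denotes rounding to the nearest integer. *)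

(* concrete reals R. IEEE 754 binary64 modelled exactly on R. *)
From Stdlib Require Import Reals ZArith List.
Open Scope R_scope.

(* x is a finite IEEE 754 double (normal, subnormal or zero): m * 2^e with
   |m| < 2^53 and -1074 <= e <= 971 (so the largest value is (2^53-1)*2^971). *)
Definition is_double (x : R) : Prop :=
  exists (m e : Z), x = IZR m * powerRZ 2 e /\ (Z.abs m < 2 ^ 53)%Z /\ (-1074 <= e <= 971)%Z.

Definition is_even_double (x : R) : Prop :=
  exists (m e : Z), x = IZR m * powerRZ 2 e /\ (Z.abs m < 2 ^ 53)%Z /\ (-1074 <= e <= 971)%Z
    /\ Z.Even m.

Definition is_normal_or_zero (x : R) : Prop :=
  is_double x /\ (x = 0 \/ powerRZ 2 (-1022) <= Rabs x).

(* IEEE round-to-nearest overflows (to infinity) iff |x| >= 2^1024 - 2^970 *)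
Definition overflow_bound : R := powerRZ 2 1024 - powerRZ 2 970.

Definition rn (x f : R) : Prop :=
  Rabs x < overflow_bound /\ is_double f /\
  (forall g, is_double g -> Rabs (x - f) <= Rabs (x - g)) /\
  (forall g, is_double g -> g <> f -> Rabs (x - g) = Rabs (x - f) -> is_even_double f).

Definition is_int (x : R) : Prop := exists z : Z, x = IZR z.

Definition is_decimal (d : R) : Prop := exists (D : Z) (j : nat), d = IZR D / 10 ^ j.

Definition is_DP (d : R) (a : nat) : Prop :=
  is_int (d * 10 ^ a) /\ forall j : nat, (j < a)%nat -> ~ is_int (d * 10 ^ j).

Definition digits_fit (d : R) (k : nat) : Prop :=
  exists (D e : Z), d = IZR D * powerRZ 10 e /\ (Z.abs D < 10 ^ Z.of_nat k)%Z.

(* d is a shortest decimal representation of the double v: it reads back to v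
   (decimal-to-double conversion is round-to-nearest) and no decimal reading
   back to v has fewer significant digits. *)
Definition is_shortest_decimal (v d : R) : Prop :=
  is_decimal d /\ rn d v /\
  forall d', is_decimal d' -> rn d' v -> forall k, digits_fit d' k -> digits_fit d k.

(* floor(log10 |x|)   (up y = least integer > y) *)
Definition floor_log10 (x : R) : Z := (up (ln (Rabs x) / ln 10) - 1)%Z.

Definition beta_hat (amax : nat) (d : R) : Z :=
  if Req_EM_T d 0 then 0%Z else (Z.of_nat amax + floor_log10 d + 1)%Z.

Definition round_int (x : R) : Z := (up (x + / 2) - 1)%Z.

(* D = d_i 10^amax is an integer because DP(d_i) <= amax, and beta_hat <= 15
   means |D| < 10^15.  Both 10^amax (amax <= 22) and D are doubles, so they are
   exact.  The two roundings d_i -> v_i and v_i * 10^amax -> p each have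
   relative error at most 2^-52, so |p - D| <= (2 |D| + 1) 2^-52 < 1/2 and
   round(p) = D.  Hence g_i / 10^amax is exactly the decimal d_i, which rounds
   to v_i by definition of the shortest representation. *)

From Stdlib Require Import Reals ZArith List Lra Lia.
Open Scope R_scope.

Section PowerRZ.

Variable b : R.
Hypothesis b_gt1 : 1 < b.

Lemma powerRZ_le_mono (m n : Z) : (m <= n)%Z -> powerRZ b m <= powerRZ b n.
Proof.
  intro Hmn. rewrite !powerRZ_Rpower by lra.
  apply Rle_Rpower; [lra | now apply IZR_le].
Qed.

Lemma powerRZ_lt_inv (m n : Z) : powerRZ b m < powerRZ b n -> (m < n)%Z.
Proof.
  intro H. destruct (Z_lt_le_dec m n) as [|Hnm]; [assumption|].
  apply powerRZ_le_mono in Hnm. lra.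
Qed.

Lemma powerRZ_Zfloor_log (y : R) : 0 < y ->
  let k := Zfloor (ln y / ln b) in powerRZ b k <= y < powerRZ b (k + 1).
Proof.
  intros Hy k.
  assert (Hlnb : 0 < ln b) by (rewrite <- ln_1; apply ln_increasing; lra).
  destruct (Zfloor_bound (ln y / ln b)) as [Hlo Hhi]. fold k in Hlo, Hhi.
  assert (Hy_exp : y = exp (ln y / ln b * ln b)).
  { replace (ln y / ln b * ln b) with (ln y) by (field; lra). now rewrite exp_ln. }
  rewrite !powerRZ_Rpower, plus_IZR by lra. unfold Rpower.
  rewrite Hy_exp at 1 2. split.
  - apply Rnot_lt_le. intro H. apply exp_lt_inv in H. nra.
  - apply exp_increasing. nra.
Qed.

End PowerRZ.

Lemma round_int_error (y : R) : Rabs (y - IZR (round_int y)) <= / 2.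
Proof.
  unfold round_int. rewrite up_Zfloor, Z.add_simpl_r.
  destruct (Zfloor_bound (y + / 2)). apply Rabs_le. lra.
Qed.

Lemma round_int_near (y : R) (z : Z) : Rabs (y - IZR z) < / 2 -> round_int y = z.
Proof.
  intro H. apply Rabs_def2 in H.
  unfold round_int. rewrite up_Zfloor, Z.add_simpl_r.
  apply Zfloor_eq. lra.
Qed.

Lemma is_double_IZR (m : Z) : (Z.abs m < 2 ^ 53)%Z -> is_double (IZR m).
Proof. intro Hm. exists m, 0%Z. repeat split; [simpl; ring | assumption | lia | lia]. Qed.

Lemma is_double_pow10 (k : nat) : (k <= 22)%nat -> is_double (10 ^ k).
Proof.
  intro Hk. exists (5 ^ Z.of_nat k)%Z, (Z.of_nat k). split.
  - rewrite <- pow_IZR, <- pow_powerRZ, <- Rpow_mult_distr. f_equal. lra.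
  - split; [|lia]. rewrite Z.abs_eq by (apply Z.pow_nonneg; lia).
    apply Z.le_lt_trans with (5 ^ 22)%Z; [apply Z.pow_le_mono_r; lia | reflexivity].
Qed.

Lemma rn_double (x f : R) : is_double x -> rn x f -> f = x.
Proof.
  intros Hx (_ & _ & Hopt & _). specialize (Hopt x Hx).
  rewrite Rminus_diag, Rabs_R0 in Hopt.
  pose proof (Rle_abs (x - f)). pose proof (Rle_abs (f - x)).
  rewrite (Rabs_minus_sym f x) in *. lra.
Qed.

Lemma exists_double_near (x : R) : powerRZ 2 (-1022) <= Rabs x < powerRZ 2 1023 ->
  exists g, is_double g /\ Rabs (x - g) <= Rabs x / 2 ^ 52.
Proof.
  intros [Hlo Hhi].
  assert (Hx : 0 < Rabs x) by (pose proof (powerRZ_lt 2 (-1022)); lra).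
  destruct (powerRZ_Zfloor_log 2 ltac:(lra) _ Hx) as [Hk1 Hk2].
  set (k := Zfloor (ln (Rabs x) / ln 2)) in Hk1, Hk2.
  assert (Hk : (-1022 <= k <= 1022)%Z).
  { assert (-1022 < k + 1)%Z by (apply (powerRZ_lt_inv 2); lra).
    assert (k < 1023)%Z by (apply (powerRZ_lt_inv 2); lra).
    lia. }
  (* Half the resolution of the binade (spacing 2^(k-52)), so that the rounded
     significand stays below 2^53 even when it rounds up. *)
  set (q := powerRZ 2 (k - 51)).
  assert (Hq : 0 < q) by (apply powerRZ_lt; lra).
  assert (Hq_lo : powerRZ 2 k = q * 2 ^ 51).
  { unfold q. rewrite pow_powerRZ, <- powerRZ_add by lra. f_equal. lia. }
  assert (Hq_hi : powerRZ 2 (k + 1) = q * 2 ^ 52).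
  { unfold q. rewrite pow_powerRZ, <- powerRZ_add by lra. f_equal. lia. }
  set (m := round_int (x / q)).
  pose proof (round_int_error (x / q)) as Hm. fold m in Hm.
  assert (Hxq : Rabs (x / q) < 2 ^ 52).
  { unfold Rdiv. rewrite Rabs_mult, Rabs_inv, (Rabs_pos_eq q) by lra.
    apply (Rmult_lt_reg_r q); [lra|]. field_simplify; lra. }
  exists (IZR m * q). split.
  - exists m, (k - 51)%Z. split; [reflexivity|]. split; [|lia].
    apply lt_IZR. rewrite abs_IZR.
    pose proof (Rabs_triang_inv (IZR m) (x / q)).
    rewrite Rabs_minus_sym in Hm. simpl. lra.
  - replace (x - IZR m * q) with ((x / q - IZR m) * q) by (field; lra).
    rewrite Rabs_mult, (Rabs_pos_eq q) by lra.
    apply Rle_trans with (q / 2); [nra | lra].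
Qed.

Lemma rn_rel_error (x f : R) : rn x f ->
  powerRZ 2 (-1022) <= Rabs x < powerRZ 2 1023 -> Rabs (x - f) <= Rabs x / 2 ^ 52.
Proof.
  intros (_ & _ & Hopt & _) Hx.
  destruct (exists_double_near x Hx) as (g & Hg & Hxg).
  eapply Rle_trans; [apply Hopt, Hg | exact Hxg].
Qed.

Lemma is_int_mul_pow10 (d : R) (a b : nat) :
  (a <= b)%nat -> is_int (d * 10 ^ a) -> is_int (d * 10 ^ b).
Proof.
  intros Hab [z Hz]. exists (z * 10 ^ Z.of_nat (b - a))%Z.
  rewrite mult_IZR, <- pow_IZR, <- Hz.
  replace b with (a + (b - a))%nat at 1 by lia. rewrite pow_add. ring.
Qed.

Lemma Rabs_lt_pow10_floor_log10 (x : R) :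
  x <> 0 -> Rabs x < powerRZ 10 (floor_log10 x + 1).
Proof.
  intro Hx. unfold floor_log10. rewrite up_Zfloor, Z.add_simpl_r.
  apply (powerRZ_Zfloor_log 10); [lra | now apply Rabs_pos_lt].
Qed.

Lemma beta_hat_bound (a : nat) (d : R) (c : Z) :
  (beta_hat a d <= c)%Z -> Rabs (d * 10 ^ a) < powerRZ 10 c.
Proof.
  unfold beta_hat. destruct (Req_EM_T d 0) as [->|Hd]; intro Hc.
  - rewrite Rmult_0_l, Rabs_R0. apply powerRZ_lt. lra.
  - rewrite Rabs_mult, (Rabs_pos_eq (10 ^ a)) by (apply pow_le; lra).
    rewrite pow_powerRZ.
    apply Rlt_le_trans with (powerRZ 10 (floor_log10 d + 1) * powerRZ 10 (Z.of_nat a)).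
    + apply Rmult_lt_compat_r; [apply powerRZ_lt; lra|].
      now apply Rabs_lt_pow10_floor_log10.
    + rewrite <- powerRZ_add by lra. apply powerRZ_le_mono; [lra | lia].
Qed.

Lemma rn_0 (f : R) : rn 0 f -> f = 0.
Proof. apply rn_double, (is_double_IZR 0). lia. Qed.

Lemma round_int_rn_scaled (d v P p : R) (D : Z) :
  1 <= P <= 10 ^ 22 -> d * P = IZR D -> Rabs (IZR D) < 10 ^ 15 ->
  rn d v -> rn (v * P) p -> round_int p = D.
Proof.
  intros HP HdD HD Hdv Hp. apply round_int_near.
  destruct (Z.eq_dec D 0) as [->|HD0].
  - assert (Hd : d = 0) by (apply (Rmult_eq_reg_r P); lra).
    subst d. apply rn_0 in Hdv. subst v. rewrite Rmult_0_l in Hp. apply rn_0 in Hp.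
    subst p. rewrite Rminus_diag, Rabs_R0. lra.
  - assert (HD1 : 1 <= Rabs (IZR D)) by (rewrite <- abs_IZR; apply IZR_le; lia).
    assert (Hd : Rabs d * P = Rabs (IZR D)).
    { rewrite <- HdD, Rabs_mult, (Rabs_pos_eq P); lra. }
    assert (Hd_range : powerRZ 2 (-1022) <= Rabs d < powerRZ 2 1023).
    { assert (powerRZ 2 (-1022) * 10 ^ 22 < 1) by (simpl; lra).
      assert (10 ^ 15 < powerRZ 2 1023) by (simpl; lra).
      pose proof (Rabs_pos d). split.
      - apply Rnot_lt_le. intro Hlt.
        assert (Rabs d * P < powerRZ 2 (-1022) * P) by (apply Rmult_lt_compat_r; lra).
        nra.
      - assert (Rabs d <= Rabs d * P) by nra. lra. }
    assert (Err_v : Rabs (v * P - IZR D) <= Rabs (IZR D) / 2 ^ 52).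
    { pose proof (rn_rel_error d v Hdv Hd_range) as Hvd.
      rewrite <- HdD, <- Rabs_Ropp.
      replace (- (v * P - d * P)) with ((d - v) * P) by ring.
      rewrite !Rabs_mult, (Rabs_pos_eq P) by lra.
      apply Rle_trans with (Rabs d / 2 ^ 52 * P); [apply Rmult_le_compat_r |]; lra. }
    assert (HvP : Rabs (IZR D) - Rabs (IZR D) / 2 ^ 52 <= Rabs (v * P)
                  <= Rabs (IZR D) + Rabs (IZR D) / 2 ^ 52).
    { pose proof (Rabs_triang_inv (v * P) (IZR D)).
      pose proof (Rabs_triang_inv (IZR D) (v * P)) as Hinv.
      rewrite Rabs_minus_sym in Hinv. lra. }
    assert (Err_p : Rabs (v * P - p) <= Rabs (v * P) / 2 ^ 52).
    { apply rn_rel_error; [exact Hp|]. simpl powerRZ. lra. }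
    replace (p - IZR D) with ((v * P - IZR D) - (v * P - p)) by ring.
    eapply Rle_lt_trans; [apply Rabs_triang|]. rewrite Rabs_Ropp. lra.
Qed.

Lemma in_le_list_max (l : list nat) (x : nat) : In x l -> (x <= list_max l)%nat.
Proof.
  intro Hx. assert (Hall : Forall (fun k => (k <= list_max l)%nat) l)
    by now apply list_max_le.
  exact (proj1 (Forall_forall _ l) Hall x Hx).
Qed.

Lemma in_le_fold_Zmax (l : list Z) (x : Z) : In x l -> (x <= fold_right Z.max 0 l)%Z.
Proof.
  induction l as [|y l IH]; simpl; [tauto|].
  intros [<-|Hx]; [lia | specialize (IH Hx); lia].
Qed.

Theorem theorem5 (n : nat) (v d : nat -> R) (a : nat -> nat) :
  (forall i, (i < n)%nat -> is_normal_or_zero (v i)) ->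
  (forall i, (i < n)%nat -> is_shortest_decimal (v i) (d i)) ->
  (forall i, (i < n)%nat -> is_DP (d i) (a i)) ->
  let amax := fold_right Nat.max 0%nat (map a (seq 0 n)) in
  let bmax := fold_right Z.max 0%Z (map (fun i => beta_hat amax (d i)) (seq 0 n)) in
  (amax <= 22)%nat -> (bmax <= 15)%Z ->
  forall i, (i < n)%nat ->
  forall t p gd : R,
    rn (10 ^ amax) t ->              (* 10^amax represented as a double *)
    rn (v i * t) p ->                (* p = v_i (x) 10^amax *)
    rn (IZR (round_int p)) gd ->     (* g_i = round(p), as a double *)
    rn (gd / t) (v i).               (* v_i = g_i (/) 10^amax *)
Proof.
  intros _ Hshort Hdp amax bmax Hamax Hbmax i Hi t p gd Ht Hp Hgd.
  destruct (Hshort i Hi) as (_ & Hdv & _).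
  destruct (Hdp i Hi) as [Hint _].
  assert (Hin : In i (seq 0 n)) by (apply in_seq; lia).
  assert (Hai : (a i <= amax)%nat) by (apply in_le_list_max, in_map, Hin).
  assert (Hbi : (beta_hat amax (d i) <= 15)%Z).
  { eapply Z.le_trans; [|exact Hbmax].
    apply in_le_fold_Zmax, (in_map (fun j => beta_hat amax (d j))), Hin. }
  destruct (is_int_mul_pow10 _ _ _ Hai Hint) as [D HD].
  assert (HD15 : Rabs (IZR D) < 10 ^ 15).
  { rewrite <- HD, (pow_powerRZ 10 15). exact (beta_hat_bound _ _ _ Hbi). }
  assert (HP : 1 <= 10 ^ amax <= 10 ^ 22).
  { split; [apply pow_R1_Rle; lra | apply Rle_pow; [lra | exact Hamax]]. }
  assert (Ht_exact : t = 10 ^ amax) by (apply rn_double; [apply is_double_pow10 |]; assumption).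
  subst t.
  assert (Hround : round_int p = D) by (eapply round_int_rn_scaled; eassumption).
  rewrite Hround in Hgd. apply rn_double in Hgd.
  - replace (gd / 10 ^ amax) with (d i); [exact Hdv|].
    rewrite Hgd, <- HD. field. lra.
  - apply is_double_IZR, lt_IZR. rewrite abs_IZR. simpl in HD15 |- *. lra.
Qed.
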